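(* Let $\mathcal S=\{x\in\mathbb R^n:x^TMx-2\beta^Tx+\gamma\le0\}$ be a paraboloid, let $\lambda_1$ be the largest eigenvalue of $M$, and let $u_n$ be the unit vector with $Mu_n=0$ and $\beta^Tu_n>0$ (so that $\mathrm{rec.cone}(\mathcal S)=\{tu_n:t\ge0\}$). (i) For every boundary point $\check x$ of $\mathcal S$ with $\|M\check x-\beta\|_2\ge\lambda_1\frac{\sqrt n}{2}$, there is $x\in\mathcal S\cap\mathbb Z^n$ with $\|x-\check x\|_2\le\sqrt n$. (ii) Let $\alpha\in\mathbb R^n$ with $u_n^T\alpha>0$, and let $\hat x$ be the minimizer of $\alpha^Tx$ over $\mathcal S$. Then $\dfrac{u_n^T\alpha}{\|\alpha\|_2}\le\dfrac{u_n^T\beta}{\lambda_1\sqrt n/2}$ holds if and only if $\|M\hat x-\beta\|_2\ge\lambda_1\frac{\sqrt n}2$; and in that case $$\min_{x\in\mathcal S\cap\mathbb Z^n}\alpha^Tx-\min_{x\in\mathcal S}\alpha^Tx\le\|\alpha\|_2\sqrt n .$$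
   Context: Paraboloid: $M\in\mathbb S^n$ is positive semidefinite of rank $n-1$, $\beta\in\mathbb R^n$, $\gamma\in\mathbb R$, and the linear system $Mx=\beta$ has no solution. *)

From HB Require Import structures.
From mathcomp Require Import all_boot all_order all_algebra.
From mathcomp Require Import reals.
Set Implicit Arguments. Unset Strict Implicit. Unset Printing Implicit Defensive.
Import Order.TTheory GRing.Theory Num.Theory.
Local Open Scope ring_scope.

Section Defs.
Variables (R : realType) (n : nat).

Definition dotv (u v : 'cV[R]_n) : R := \sum_(i < n) u i 0 * v i 0.

Definition norm2 (v : 'cV[R]_n) : R := Num.sqrt (dotv v v).

Definition in_par (M : 'M[R]_n) (beta : 'cV[R]_n) (gamma : R) (x : 'cV[R]_n) : Prop :=
  dotv x (M *m x) - 2 * dotv beta x + gamma <= 0.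

Definition paraboloid_data (M : 'M[R]_n) (beta : 'cV[R]_n) : Prop :=
  [/\ M^T = M,
      (forall x : 'cV[R]_n, 0 <= dotv x (M *m x)),
      \rank M = n.-1
    & ~ (exists x : 'cV[R]_n, M *m x = beta)].

Definition largest_eigenvalue (M : 'M[R]_n) (lambda : R) : Prop :=
  eigenvalue M lambda /\ (forall a, eigenvalue M a -> a <= lambda).

Definition boundary_pt (P : 'cV[R]_n -> Prop) (x : 'cV[R]_n) : Prop :=
  forall e : R, 0 < e ->
    (exists y, P y /\ norm2 (y - x) < e) /\ (exists z, ~ P z /\ norm2 (z - x) < e).

Definition int_vec (x : 'cV[R]_n) : Prop := forall i, x i 0 \is a Num.int.

End Defs.

From mathcomp Require Import all_boot all_order all_algebra.
From mathcomp Require Import reals.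
From mathcomp Require Import complex spectral.
From mathcomp Require Import ring lra.
Import Order.TTheory GRing.Theory Num.Theory.
Local Open Scope ring_scope.

(* Write g x := x^T M x - 2 beta^T x + gamma and v x := M x - beta, so that
   g (x + w) = g x + 2 v(x)^T w + w^T M w.  If x lies in S and
   |v x| >= lambda1 rho with rho = sqrt n / 2, then the ball of radius rho
   centred at x - rho v(x) / |v(x)| lies in S, because w^T M w <= lambda1 |w|^2;
   rounding its centre to the nearest integer point moves it by at most rho.
   At the minimizer xh, v xh <> 0 since M x = beta has no solution, so
   optimality forces alpha = a v(xh) with a < 0; as u^T v(xh) = - beta^T u, the
   angle condition is then exactly |v xh| >= lambda1 rho.  The integer minimum
   exists because ker M is spanned by u and v(xh)^T u <> 0, so that
   M + v(xh) v(xh)^T is positive definite and the part of S below any level of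
   alpha is bounded. *)

Section Dotv.
Context {R : realType} {n : nat}.
Local Notation dot := (@dotv R n).
Implicit Types (a b c : 'cV[R]_n) (A : 'M[R]_n).

Lemma dotvC a b : dot a b = dot b a.
Proof. by apply: eq_bigr => i _; rewrite mulrC. Qed.

Lemma dotvDl a b c : dot (a + b) c = dot a c + dot b c.
Proof. by rewrite /dotv -big_split; apply: eq_bigr => i _; rewrite !mxE mulrDl. Qed.

Lemma dotvDr a b c : dot c (a + b) = dot c a + dot c b.
Proof. by rewrite dotvC dotvDl !(dotvC c). Qed.

Lemma dotvZl (t : R) a b : dot (t *: a) b = t * dot a b.
Proof. by rewrite /dotv mulr_sumr; apply: eq_bigr => i _; rewrite !mxE mulrA. Qed.

Lemma dotvZr (t : R) a b : dot b (t *: a) = t * dot b a.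
Proof. by rewrite dotvC dotvZl dotvC. Qed.

Lemma dotvNl a b : dot (- a) b = - dot a b.
Proof. by rewrite -scaleN1r dotvZl mulN1r. Qed.

Lemma dotvNr a b : dot b (- a) = - dot b a.
Proof. by rewrite dotvC dotvNl dotvC. Qed.

Lemma dotvBl a b c : dot (a - b) c = dot a c - dot b c.
Proof. by rewrite dotvDl dotvNl. Qed.

Lemma dotvBr a b c : dot c (a - b) = dot c a - dot c b.
Proof. by rewrite dotvDr dotvNr. Qed.

Lemma dotv0l a : dot 0 a = 0.
Proof. by rewrite /dotv big1 // => i _; rewrite mxE mul0r. Qed.

Lemma dotv0r a : dot a 0 = 0.
Proof. by rewrite dotvC dotv0l. Qed.

Lemma dotvE a b : dot a b = (a^T *m b) 0 0.
Proof. by rewrite !mxE; apply: eq_bigr => i _; rewrite mxE. Qed.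

Lemma dotv_mulmx A a b : dot a (A *m b) = dot (A^T *m a) b.
Proof. by rewrite !dotvE trmx_mul trmxK mulmxA. Qed.

Lemma dotv_mulmx_sym A a b : A^T = A -> dot a (A *m b) = dot b (A *m a).
Proof. by move=> symA; rewrite dotv_mulmx symA dotvC. Qed.

Lemma sqr_coord_le_dotvv a i : a i 0 ^+ 2 <= dot a a.
Proof.
rewrite /dotv (bigD1 i) //= -expr2 lerDl.
by apply: sumr_ge0 => j _; rewrite -expr2 sqr_ge0.
Qed.

Lemma dotvv_ge0 a : 0 <= dot a a.
Proof. by apply: sumr_ge0 => i _; rewrite -expr2 sqr_ge0. Qed.

Lemma dotvv_eq0 {a} : dot a a = 0 -> a = 0.
Proof.
move=> a0; apply/matrixP => i j; rewrite ord1 mxE; apply/eqP.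
by rewrite -sqrf_eq0 eq_le sqr_ge0 andbT -a0 sqr_coord_le_dotvv.
Qed.

Lemma dotvv_gt0 {a} : a != 0 -> 0 < dot a a.
Proof.
by move=> an0; rewrite lt_def dotvv_ge0 andbT; apply: contra an0 => /eqP/dotvv_eq0->.
Qed.

Lemma dotv_CauchySchwarz a b : dot a b ^+ 2 <= dot a a * dot b b.
Proof.
have [->|an0] := eqVneq a 0.
  by rewrite !dotv0l mul0r expr2 mulr0.
have aa_gt0 := dotvv_gt0 an0.
set t := dot a b / dot a a.
(* expand |b - t a|^2 >= 0 at the projection coefficient t *)
have := dotvv_ge0 (b - t *: a).
rewrite dotvBl !dotvBr !dotvZl !dotvZr (dotvC b a) /t.
move: (dot a a) (dot a b) (dot b b) aa_gt0 => s p q s_gt0 h.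
have := mulr_ge0 (ltW s_gt0) h.
have -> : s * (q - p / s * p - (p / s * p - p / s * (p / s * s))) = s * q - p ^+ 2.
  by field; rewrite gt_eqF.
by rewrite subr_ge0.
Qed.

Lemma norm2_ge0 a : 0 <= norm2 a.
Proof. exact: sqrtr_ge0. Qed.

Lemma sqr_norm2 a : norm2 a ^+ 2 = dot a a.
Proof. by rewrite sqr_sqrtr // dotvv_ge0. Qed.

Lemma norm2_le a r : 0 <= r -> (norm2 a <= r) = (dot a a <= r ^+ 2).
Proof.
by move=> r_ge0; rewrite -[X in _ = X]ler_sqrt ?exprn_ge0 // sqrtr_sqr ger0_norm.
Qed.

Lemma norm2N a : norm2 (- a) = norm2 a.
Proof. by rewrite /norm2 dotvNl dotvNr opprK. Qed.

Lemma norm2Z (t : R) a : norm2 (t *: a) = `|t| * norm2 a.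
Proof. by rewrite /norm2 dotvZl dotvZr mulrA -expr2 sqrtrM ?sqr_ge0 // sqrtr_sqr. Qed.

Lemma dotv_le_norm2 a b : dot a b <= norm2 a * norm2 b.
Proof.
have [ab_le0|ab_gt0] := lerP (dot a b) 0.
  by apply: le_trans ab_le0 _; rewrite mulr_ge0 ?norm2_ge0.
rewrite -(ger0_norm (ltW ab_gt0)) -sqrtr_sqr /norm2 -sqrtrM ?dotvv_ge0 //.
by rewrite ler_sqrt ?mulr_ge0 ?dotvv_ge0 // dotv_CauchySchwarz.
Qed.

Lemma norm2D_le a b : norm2 (a + b) <= norm2 a + norm2 b.
Proof.
rewrite norm2_le ?addr_ge0 ?norm2_ge0 // sqrrD !sqr_norm2.
rewrite dotvDl !dotvDr (dotvC b a).
by have := dotv_le_norm2 a b; lra.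
Qed.

End Dotv.

Lemma round_int_vec {R : realType} {n : nat} (c : 'cV[R]_n) :
  exists2 p, int_vec p & dotv (p - c) (p - c) * 4 <= n%:R.
Proof.
exists (\col_i (Num.floor (c i 0 + 2^-1))%:~R).
  by move=> i; rewrite mxE intr_int.
have -> : n%:R = \sum_(i < n) (1 : R) by rewrite sumr_const card_ord.
rewrite /dotv mulr_suml; apply: ler_sum => i _; rewrite !mxE.
have := floor_itv (c i 0 + 2^-1); rewrite intrD mulr1z.
move: (Num.floor _) => m /andP [].
have half2 : (2 : R)^-1 * 2 = 1 by rewrite mulVf // pnatr_eq0.
move: (m%:~R : R) => r r_le r_gt; nra.
Qed.

Lemma coords_bounded {R : realType} {n : nat} (B : R) :
  exists K : nat, forall (y : 'cV[R]_n) i, dotv y y <= B -> `|y i 0| <= K%:R.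
Proof.
exists (Num.Def.archi_bound (1 + `|B|)) => y i yy.
apply: le_trans (ltW (archi_boundP _)); last by rewrite addr_ge0.
have := sqr_coord_le_dotvv y i; have := ler_norm B.
have : `|y i 0| <= 1 + y i 0 ^+ 2.
  by case: (lerP 0 (y i 0)) => h; [rewrite ger0_norm | rewrite ltr0_norm]; nra.
lra.
Qed.

(* Integer vectors with bounded coordinates form a finite set, enumerated by
   shifting the coordinates into ['I_(2K + 1)]. *)
Lemma exists_int_vec_argmin {R : realType} {n : nat} (P : pred 'cV[R]_n)
    (F : 'cV[R]_n -> R) (K : nat) x0 :
  int_vec x0 -> P x0 ->
  (forall y, int_vec y -> P y -> F y <= F x0 -> forall i, `|y i 0| <= K%:R) ->
  exists xz, [/\ int_vec xz, P xz & forall y, int_vec y -> P y -> F xz <= F y].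
Proof.
move=> x0_int Px0 bounded.
pose emb (f : {ffun 'I_n -> 'I_(K.*2.+1)}) : 'cV[R]_n :=
  \col_i ((f i : nat)%:R - K%:R).
have emb_int f : int_vec (emb f) by move=> i; rewrite mxE rpredB // natr_int.
have emb_onto y : int_vec y -> (forall i, `|y i 0| <= K%:R) -> exists f, emb f = y.
  move=> y_int y_bd; exists [ffun i => inord (Num.truncn (y i 0 + K%:R))].
  apply/matrixP => i j; rewrite ord1 !mxE ffunE.
  have y_bd' := y_bd i; rewrite ler_norml in y_bd'.
  have yK_nat : y i 0 + K%:R \is a Num.nat.
    by rewrite natrEint rpredD ?natr_int //=; lra.
  rewrite inordK; first by rewrite truncnK // addrK.
  by rewrite ltnS -(ler_nat R) truncnK // -mul2n natrM; lra.
have [f0 emb_f0] := emb_onto x0 x0_int (bounded x0 x0_int Px0 (lexx _)).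
pose Q := [pred f | P (emb f) && (F (emb f) <= F x0)].
have Qf0 : Q f0 by rewrite /= emb_f0 Px0 lexx.
case: (arg_minP (fun f => F (emb f)) Qf0) => fm /andP [Pfm Ffm] fm_min.
exists (emb fm); split => // y y_int Py.
have [Fy|Fy] := lerP (F y) (F x0); last exact: le_trans Ffm (ltW Fy).
have [f emb_f] := emb_onto y y_int (bounded y y_int Py Fy).
by rewrite -emb_f; apply: fm_min; rewrite /= emb_f Py Fy.
Qed.

Lemma normal_cone_halfspace {R : realType} {n : nat} (v alpha : 'cV[R]_n) :
  v != 0 -> (forall w, dotv v w < 0 -> 0 <= dotv alpha w) ->
  exists2 a, a <= 0 & alpha = a *: v.
Proof.
move=> vn0 alpha_ge0.
have vv_gt0 := dotvv_gt0 vn0.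
set a := dotv alpha v / dotv v v.
set p := alpha - a *: v.
have vp0 : dotv v p = 0.
  by rewrite dotvBr dotvZr /a (dotvC v alpha) mulfVK ?subrr // gt_eqF.
have alpha_p : dotv alpha p = dotv p p.
  by rewrite {2}/p dotvBl dotvZl vp0 mulr0 subr0.
(* test the hypothesis on w := - v - r p, for which v^T w = - |v|^2 < 0 *)
have alpha_test r : 0 <= - dotv alpha v - r * dotv p p.
  have := alpha_ge0 (- v - r *: p).
  rewrite dotvBr dotvNr dotvZr vp0 mulr0 subr0 oppr_lt0.
  by rewrite dotvBr dotvNr dotvZr alpha_p => ->.
have pp0 : dotv p p = 0.
  apply/eqP; rewrite eq_le dotvv_ge0 andbT leNgt; apply/negP => pp_gt0.
  have := alpha_test ((`|dotv alpha v| + 1) / dotv p p); rewrite mulfVK ?gt_eqF //.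
  by have := ler_norm (- dotv alpha v); rewrite normrN; lra.
exists a; last by apply/eqP; rewrite -subr_eq0 -/p (dotvv_eq0 pp0).
have := alpha_test 0; rewrite mul0r subr0 oppr_ge0 /a => alpha_v_le0.
by rewrite pmulr_lle0 // invr_gt0.
Qed.

Section SymmetricSpectral.
Context {R : realType} {n : nat} {A : 'M[R]_n}.
Hypothesis symA : A^T = A.

Local Notation toC := (real_complex R).
Let AC := map_mx toC A.
Let P := spectralmx AC.
Let D := spectral_diag AC.

Let toC_Re (z : R[i]) : z \is Num.real -> toC (complex.Re z) = z.
Proof. by move=> z_real; rewrite [toC _]complexRe; apply/Creal_ReP. Qed.

Let AC_hermsym : AC \is hermsymmx.
Proof.
apply: realsym_hermsym; last by apply/mxOverP => i j; rewrite mxE complex_real.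
apply/is_hermitianmxP; rewrite expr0 scale1r map_mx_id //.
by apply/matrixP => i j; rewrite !mxE -{1}symA mxE.
Qed.

Let AC_spectral : AC = invmx P *m diag_mx D *m P.
Proof. exact/orthomx_spectralP/hermitian_normalmx. Qed.

Let D_real i : toC (complex.Re (D 0 i)) = D 0 i.
Proof. by apply: toC_Re; exact: (mxOverP (hermitian_spectral_diag_real AC_hermsym)). Qed.

Let eigenvalue_Re_spectral_diag i : eigenvalue A (complex.Re (D 0 i)).
Proof.
have P_unit : P \in unitmx := spectral_unit AC.
rewrite eigenvalue_root_char /root -(fmorph_eq0 toC) -horner_map map_char_poly.
rewrite [X in _.[X]]D_real -/(root _ _) -eigenvalue_root_char.
apply/eigenvalueP; exists (row i P).
  rewrite -row_mul -/AC AC_spectral !mulmxA mulmxV // mul1mx row_mul row_diag_mx.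
  by rewrite -scalemxAl -rowE.
apply/negP => /eqP Pi0.
have : row i P *m invmx P = 0 by rewrite Pi0 mul0mx.
rewrite rowE mulmxK // => /matrixP /(_ 0 i); rewrite !mxE !eqxx /= => /eqP.
by rewrite oner_eq0.
Qed.

Let quad_form_spectral_coords (x : 'cV[R]_n) (E : 'rV_n) :
  let y := P *m map_mx toC x in
  ((map_mx toC x)^T *m (invmx P *m diag_mx E *m P) *m map_mx toC x) 0 0
    = \sum_i E 0 i * `|y i 0| ^+ 2.
Proof.
move=> y; have xP : (map_mx toC x)^T *m invmx P = (map_mx Num.conj y)^T.
  rewrite invmx_unitary ?spectral_unitarymx // /y map_mxM trmx_mul map_trmx.
  congr (_ *m _); last by rewrite map_trmx.
  apply/matrixP => i j; rewrite !mxE.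
  by apply/esym/conj_Creal; rewrite complex_real.
rewrite !mulmxA xP -mulmxA mxE; apply: eq_bigr => i _.
by rewrite mul_mx_diag !mxE normCK; ring.
Qed.

Lemma symmx_quad_form_spectral :
  exists d : 'I_n -> R, (forall i, eigenvalue A (d i)) /\
    forall x : 'cV[R]_n, exists c : 'I_n -> R,
      [/\ forall i, 0 <= c i, dotv x x = \sum_i c i &
          dotv x (A *m x) = \sum_i d i * c i].
Proof.
exists (fun i => complex.Re (D 0 i)).
split=> [i|x]; first exact: eigenvalue_Re_spectral_diag.
set y := P *m map_mx toC x.
have c_real i : toC (complex.Re (`|y i 0| ^+ 2)) = `|y i 0| ^+ 2.
  by apply: toC_Re; rewrite realX // normr_real.
exists (fun i => complex.Re (`|y i 0| ^+ 2)); split.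
- by move=> i; rewrite -ler0c c_real exprn_ge0.
- apply: (fmorph_inj toC); rewrite /dotv !rmorph_sum.
  rewrite [RHS](eq_bigr _ (fun i _ => c_real i)).
  transitivity (\sum_i (const_mx 1 : 'rV_n) 0 i * `|y i 0| ^+ 2); last first.
    by apply: eq_bigr => i _; rewrite mxE mul1r.
  rewrite -quad_form_spectral_coords diag_const_mx mulmx1 mulVmx ?spectral_unit //.
  by rewrite mulmx1 mxE; apply: eq_bigr => i _; rewrite rmorphM !mxE.
- apply: (fmorph_inj toC); rewrite /dotv !rmorph_sum.
  under [RHS]eq_bigr do rewrite rmorphM [X in _ * X]c_real [X in X * _]D_real.
  rewrite -quad_form_spectral_coords -AC_spectral -mulmxA mxE.
  apply: eq_bigr => i _; rewrite rmorphM !mxE rmorph_sum.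
  by congr (_ * _); apply: eq_bigr => j _; rewrite rmorphM !mxE.
Qed.

Lemma symmx_eigenvector {e} : eigenvalue A e ->
  exists2 x : 'cV[R]_n, x != 0 & A *m x = e *: x.
Proof.
move=> /eigenvalueP [v Av vn0]; exists v^T.
  by apply: contra vn0 => /eqP v0; rewrite -(trmxK v) v0 trmx0.
by rewrite -{1}symA -trmx_mul Av linearZ.
Qed.

End SymmetricSpectral.

Section QuadraticForms.
Context {R : realType} {n : nat}.
Local Notation dot := (@dotv R n).
Implicit Types (A : 'M[R]_n) (x : 'cV[R]_n).

Lemma quad_form_le_eigen_bound {A L} : A^T = A ->
  (forall e, eigenvalue A e -> e <= L) -> forall x, dot x (A *m x) <= L * dot x x.
Proof.
move=> symA L_ge x.
have [d [d_eig /(_ x) [c [c_ge0 -> ->]]]] := symmx_quad_form_spectral symA.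
by rewrite mulr_sumr; apply: ler_sum => i _; rewrite ler_wpM2r // L_ge.
Qed.

Lemma posdef_quad_form_coercive {A} : A^T = A ->
  (forall x, x != 0 -> 0 < dot x (A *m x)) ->
  exists2 mu, 0 < mu & forall x, mu * dot x x <= dot x (A *m x).
Proof.
move=> symA posA; have [d [d_eig d_form]] := symmx_quad_form_spectral symA.
have d_gt0 i : 0 < d i.
  have [x xn0 Ax] := symmx_eigenvector symA (d_eig i).
  by have := posA x xn0; rewrite Ax dotvZr pmulr_lgt0 // dotvv_gt0.
exists (\big[Num.min/1]_i d i); first by apply: lt_bigmin.
move=> x; have [c [c_ge0 -> ->]] := d_form x.
by rewrite mulr_sumr; apply: ler_sum => i _; rewrite ler_wpM2r // bigmin_le.
Qed.

Lemma psd_quad_form_eq0 {A x} : A^T = A -> (forall y, 0 <= dot y (A *m y)) ->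
  dot x (A *m x) = 0 -> A *m x = 0.
Proof.
move=> symA psdA xAx0; apply: dotvv_eq0.
set p := dot (A *m x) (A *m x); set q := dot (A *m x) (A *m (A *m x)).
(* nonnegativity along the line x - s A x forces |A x|^2 = 0 *)
have along s : 0 <= - 2 * s * p + s ^+ 2 * q.
  have := psdA (x - s *: (A *m x)).
  rewrite mulmxBr -scalemxAr dotvBl !dotvBr !dotvZl !dotvZr xAx0.
  by rewrite (dotv_mulmx_sym _ x (A *m x) symA) -/p -/q; lra.
have p_ge0 : 0 <= p := dotvv_ge0 _.
have q_ge0 : 0 <= q := psdA _.
apply/eqP; rewrite eq_le p_ge0 andbT leNgt; apply/negP => p_gt0.
have := along (p / (q + 1)).
have t_gt0 : 0 < p / (q + 1) by rewrite divr_gt0 //; lra.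
have : p / (q + 1) * (q + 1) = p by rewrite mulfVK // gt_eqF //; lra.
move: (p / (q + 1)) t_gt0 => t; nra.
Qed.

Lemma psd_eigenvalue_ge0 {A e} : A^T = A -> (forall y, 0 <= dot y (A *m y)) ->
  eigenvalue A e -> 0 <= e.
Proof.
move=> symA psdA /(symmx_eigenvector symA) [x xn0 Ax].
by have := psdA x; rewrite Ax dotvZr pmulr_lge0 // dotvv_gt0.
Qed.

Lemma rank_pred_kernel_colinear {A u x} : \rank A = n.-1 -> A *m u = 0 -> u != 0 ->
  A *m x = 0 -> exists t, x = t *: u.
Proof.
move=> rkA Au un0 Ax.
have n_gt0 : (0 < n)%N by case: n u un0 {rkA Au Ax x A} => // u; rewrite [u]flatmx0 eqxx.
have ker_tr (y : 'cV_n) : A *m y = 0 -> (y^T <= kermx A^T)%MS.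
  by move=> Ay; apply/sub_kermxP; rewrite -trmx_mul Ay trmx0.
have uTn0 : u^T != 0 by apply: contra un0 => /eqP uT0; rewrite -(trmxK u) uT0 trmx0.
have ker_u : (kermx A^T <= u^T)%MS.
  case: (mxrank_leqif_sup (ker_tr u Au)) => _ <-.
  rewrite mxrank_ker [\rank A^T]mxrank_tr rkA rank_rV uTn0.
  by case: (n) n_gt0 => // k _; rewrite /= subSnn.
have /submxP [D xD] := submx_trans (ker_tr x Ax) ker_u.
exists (D 0 0); apply: trmx_inj.
by rewrite xD linearZ /= {1}(mx11_scalar D) mul_scalar_mx.
Qed.

Lemma psd_rank_pred_add_sqr_coercive {A u} v : A^T = A ->
  (forall y, 0 <= dot y (A *m y)) -> \rank A = n.-1 -> A *m u = 0 -> u != 0 ->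
  dot v u != 0 ->
  exists2 mu, 0 < mu & forall x, mu * dot x x <= dot x (A *m x) + dot v x ^+ 2.
Proof.
move=> symA psdA rkA Au un0 vu_n0.
pose Q := A + v *m v^T.
have QE x : dot x (Q *m x) = dot x (A *m x) + dot v x ^+ 2.
  rewrite mulmxDl -mulmxA (mx11_scalar (v^T *m x)) -dotvE mul_mx_scalar.
  by rewrite dotvDr dotvZr (dotvC x v) expr2.
have symQ : Q^T = Q by rewrite linearD /= symA trmx_mul trmxK.
have [|mu mu_gt0 mu_le] := posdef_quad_form_coercive symQ; last first.
  by exists mu => // x; rewrite -QE.
move=> x xn0; rewrite QE lt_def addr_ge0 ?psdA ?sqr_ge0 // andbT.
apply: contra xn0; rewrite paddr_eq0 ?psdA ?sqr_ge0 // sqrf_eq0 => /andP [/eqP xAx0 vx0].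
have Ax0 := psd_quad_form_eq0 symA psdA xAx0.
move: vx0; have [t ->] := rank_pred_kernel_colinear rkA Au un0 Ax0.
rewrite dotvZr mulf_eq0 (negbTE vu_n0) orbF => /eqP->.
by rewrite scale0r.
Qed.

End QuadraticForms.

Section Paraboloid.
Context {R : realType} {n : nat}.
Local Notation dot := (@dotv R n).
Context {M : 'M[R]_n} {beta : 'cV[R]_n} {gamma : R}.
Hypothesis symM : M^T = M.
Local Notation S := (in_par M beta gamma).
Local Notation g x := (dot x (M *m x) - 2 * dot beta x + gamma).
Local Notation grad x := (M *m x - beta).
Implicit Types (x y z w alpha : 'cV[R]_n).

Lemma in_par_expand x w : g (x + w) = g x + 2 * dot (grad x) w + dot w (M *m w).
Proof.
rewrite mulmxDr !dotvDl !dotvDr dotvNl (dotvC (M *m x) w).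
by rewrite (dotv_mulmx_sym _ w x symM) (dotvC beta w); ring.
Qed.

Lemma dotv_ker_grad u x : M *m u = 0 -> dot u (grad x) = - dot beta u.
Proof.
by move=> Mu; rewrite dotvBr (dotv_mulmx_sym _ u x symM) Mu dotv0r sub0r dotvC.
Qed.

Lemma ball_in_par lambda rho xc z :
  0 <= lambda -> 0 <= rho -> (forall w, dot w (M *m w) <= lambda * dot w w) ->
  S xc -> grad xc != 0 -> lambda * rho <= norm2 (grad xc) -> dot z z <= rho ^+ 2 ->
  S (xc - (rho / norm2 (grad xc)) *: grad xc + z).
Proof.
move=> lambda_ge0 rho_ge0 lambda_max Sxc v_n0 far zz.
set v := grad xc in v_n0 far *; set N := norm2 v in far *.
have N_gt0 : 0 < N by rewrite sqrtr_gt0 dotvv_gt0.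
set k := rho / N; have kN : k * N = rho by rewrite mulfVK // gt_eqF.
set s := dot v z; pose w := z - k *: v.
have s_le : s <= rho * N.
  have := dotv_le_norm2 v z; rewrite mulrC -/N => /le_trans; apply.
  by rewrite ler_wpM2r ?(ltW N_gt0) // norm2_le.
have vw : dot v w = s - rho * N.
  by rewrite /w dotvBr dotvZr -/s -sqr_norm2 -/N -kN; ring.
have ww : dot w w = dot z z - 2 * (k * s) + rho ^+ 2.
  rewrite /w dotvBl !dotvBr !dotvZl !dotvZr (dotvC z v) -/s.
  by rewrite -[dot v v]sqr_norm2 -/N -kN; ring.
have wMw : dot w (M *m w) <= lambda * dot z z - 2 * (lambda * k * s) + lambda * rho ^+ 2.
  suff -> : lambda * dot z z - 2 * (lambda * k * s) + lambda * rho ^+ 2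
            = lambda * dot w w by exact: lambda_max.
  by rewrite ww; ring.
have lzz : lambda * dot z z <= lambda * rho ^+ 2 := ler_wpM2l lambda_ge0 zz.
(* the slack is (rho N - s) (1 - lambda k), and lambda k <= 1 is the far condition *)
have lk : lambda * k <= 1 by rewrite mulrA ler_pdivrMr // mul1r.
have slack : 0 <= rho * N - s - lambda * rho ^+ 2 + lambda * k * s.
  have -> : rho * N - s - lambda * rho ^+ 2 + lambda * k * s
          = (rho * N - s) * (1 - lambda * k) by rewrite -kN; ring.
  by rewrite mulr_ge0 // subr_ge0.
have -> : xc - k *: v + z = xc + w by rewrite /w addrCA addrC.
move: Sxc; rewrite /in_par in_par_expand vw; lra.
Qed.

Lemma angle_le_iff_norm2_grad {alpha a x u r} : a < 0 -> alpha = a *: grad x ->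
  M *m u = 0 -> 0 < dot u beta ->
  (dot u alpha * r <= dot u beta * norm2 alpha) <-> r <= norm2 (grad x).
Proof.
move=> a_lt0 -> Mu beta_u; rewrite dotvZr dotv_ker_grad // norm2Z ltr0_norm //.
rewrite (dotvC beta u) mulrN -mulNr mulrCA -mulrA ler_pM2l ?mulr_gt0 ?oppr_gt0 //.
by rewrite ler_pM2l.
Qed.

Lemma int_point_near {lambda xc} :
  0 <= lambda -> (forall w, dot w (M *m w) <= lambda * dot w w) ->
  S xc -> grad xc != 0 -> lambda * Num.sqrt n%:R / 2 <= norm2 (grad xc) ->
  exists p, [/\ int_vec p, S p & norm2 (p - xc) <= Num.sqrt n%:R].
Proof.
move=> lambda_ge0 lambda_max Sxc v_n0; rewrite -mulrA; set rho := _ / 2 => far.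
have rho_ge0 : 0 <= rho by rewrite divr_ge0 ?sqrtr_ge0.
have rho2 : rho ^+ 2 * 4 = n%:R by rewrite expr_div_n sqr_sqrtr ?ler0n //; field.
set c := xc - (rho / norm2 (grad xc)) *: grad xc.
have [p p_int pc] := round_int_vec c.
have pc_le : dot (p - c) (p - c) <= rho ^+ 2 by lra.
exists p; split => //.
  by rewrite -(subrK c p) addrC /c; apply: (ball_in_par lambda).
have N_gt0 : 0 < norm2 (grad xc) by rewrite sqrtr_gt0 dotvv_gt0.
have -> : Num.sqrt n%:R = rho + rho by rewrite /rho; field.
rewrite -(subrK c p) -addrA; apply: le_trans (norm2D_le _ _) _.
apply: lerD; first by rewrite norm2_le.
rewrite /c addrAC subrr add0r norm2N norm2Z ger0_norm ?divr_ge0 ?sqrtr_ge0 //.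
by rewrite mulfVK ?gt_eqF.
Qed.

Hypothesis psdM : forall y, 0 <= dot y (M *m y).

Lemma in_par_closed x :
  (forall e, 0 < e -> exists y, S y /\ norm2 (y - x) < e) -> S x.
Proof.
move=> near_x; rewrite /in_par leNgt; apply/negP => gx_gt0.
set N := norm2 (grad x).
have N_ge0 : 0 <= N := norm2_ge0 _.
pose e := g x / (2 * N + 1).
have e_gt0 : 0 < e by rewrite divr_gt0 //; lra.
have eN : e * (2 * N + 1) = g x by rewrite mulfVK //; apply: lt0r_neq0; lra.
have [y [Sy yx]] := near_x e e_gt0.
have yE : y = x + (y - x) by rewrite addrC subrK.
move: Sy; rewrite /in_par yE in_par_expand.
have := dotv_le_norm2 (- grad x) (y - x); rewrite dotvNl norm2N -/N.
have := psdM (y - x).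
have : N * norm2 (y - x) <= N * e by rewrite ler_wpM2l // ltW.
lra.
Qed.

Lemma in_par_descent {x w} : S x -> dot (grad x) w < 0 ->
  exists2 t, 0 < t & S (x + t *: w).
Proof.
move=> Sx vw_lt0; set q := dot w (M *m w).
have q_ge0 : 0 <= q := psdM w.
pose t := - dot (grad x) w / (q + 1).
have t_gt0 : 0 < t by rewrite divr_gt0 ?oppr_gt0 //; lra.
have tq : t * (q + 1) = - dot (grad x) w by rewrite mulfVK //; apply: lt0r_neq0; lra.
have tqt : t * (t * q) <= - (t * dot (grad x) w).
  by rewrite -mulrN -tq !ler_pM2l // lerDl.
have tvw : t * dot (grad x) w < 0 by rewrite pmulr_rlt0.
exists t => //; move: Sx; rewrite /in_par in_par_expand -scalemxAr !dotvZr dotvZl -/q.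
lra.
Qed.

Lemma in_par_minimizer_grad {alpha xh} : S xh ->
  (forall x, S x -> dot alpha xh <= dot alpha x) -> grad xh != 0 ->
  exists2 a, a <= 0 & alpha = a *: grad xh.
Proof.
move=> Sxh xh_min v_n0; apply: normal_cone_halfspace => // w vw_lt0.
have [t t_gt0 St] := in_par_descent Sxh vw_lt0.
have := xh_min _ St; rewrite dotvDr dotvZr lerDl.
by rewrite pmulr_rge0.
Qed.

Lemma in_par_sublevel_bounded {u xh} c : \rank M = n.-1 -> M *m u = 0 -> u != 0 ->
  dot beta u != 0 -> S xh ->
  exists B, forall y, S y -> c <= dot (grad xh) y -> dot y y <= B.
Proof.
move=> rkM Mu un0 beta_u Sxh; set v := grad xh.
have vu_n0 : dot v u != 0 by rewrite dotvC dotv_ker_grad // oppr_eq0.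
have [mu mu_gt0 mu_le] := psd_rank_pred_add_sqr_coercive v symM psdM rkM Mu un0 vu_n0.
(* on the sublevel set, v^T w lies in [- D2, D1], hence w^T M w <= 2 D1 + 2 D2 *)
pose D1 := - g xh / 2; pose D2 := dot v xh - c.
pose E := 2 * D1 + 2 * D2 + D1 ^+ 2 + D2 ^+ 2.
exists (2 * dot xh xh + 2 * (E / mu)) => y.
have [w ->] : exists w, y = xh + w by exists (y - xh); rewrite addrC subrK.
rewrite /in_par in_par_expand dotvDr -/v => Sw cw.
have wMw_ge0 := psdM w.
have vw_le : dot v w <= D1 by rewrite /D1; lra.
have vw_ge : - D2 <= dot v w by rewrite /D2; lra.
have vw2 : dot v w ^+ 2 <= D1 ^+ 2 + D2 ^+ 2.
  by have := sqr_ge0 D1; have := sqr_ge0 D2; case: (lerP 0 (dot v w)); nra.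
have wMw : dot w (M *m w) <= 2 * D1 + 2 * D2 by rewrite /D1; lra.
have ww : dot w w <= E / mu.
  by rewrite ler_pdivlMr // mulrC; apply: le_trans (mu_le w) _; rewrite /E; lra.
have := dotvv_ge0 (xh - w).
rewrite !(dotvDl, dotvDr, dotvNl, dotvNr) (dotvC w xh); lra.
Qed.

Lemma exists_int_in_par_minimizer {u alpha a xh x0} :
  \rank M = n.-1 -> M *m u = 0 -> u != 0 -> dot beta u != 0 -> S xh ->
  a < 0 -> alpha = a *: grad xh -> int_vec x0 -> S x0 ->
  exists xz, [/\ int_vec xz, S xz &
    forall y, int_vec y -> S y -> dot alpha xz <= dot alpha y].
Proof.
move=> rkM Mu un0 beta_u Sxh a_lt0 alpha_eq x0_int Sx0.
have [B yB] := in_par_sublevel_bounded (dot (grad xh) x0) rkM Mu un0 beta_u Sxh.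
have [K yK] := coords_bounded (n := n) B.
apply: (@exists_int_vec_argmin _ _ [pred y | g y <= 0] (dotv alpha) K x0) => //.
move=> y _ Sy; rewrite alpha_eq !dotvZl ler_nM2l // => vy.
by move=> i; apply/yK/yB.
Qed.

End Paraboloid.

Theorem proposition6p4 (R : realType) (n : nat) (M : 'M[R]_n)
    (beta : 'cV[R]_n) (gamma lambda1 : R) (un : 'cV[R]_n) :
  paraboloid_data M beta ->
  largest_eigenvalue M lambda1 ->
  norm2 un = 1 -> M *m un = 0 -> 0 < dotv beta un ->
  (forall xc : 'cV[R]_n,
      boundary_pt (in_par M beta gamma) xc ->
      lambda1 * Num.sqrt (n%:R) / 2 <= norm2 (M *m xc - beta) ->
      exists x : 'cV[R]_n,
        [/\ int_vec x, in_par M beta gamma x & norm2 (x - xc) <= Num.sqrt (n%:R)])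
  /\
  (forall alpha xh : 'cV[R]_n,
      0 < dotv un alpha ->
      in_par M beta gamma xh ->
      (forall x, in_par M beta gamma x -> dotv alpha xh <= dotv alpha x) ->
      ((dotv un alpha * (lambda1 * Num.sqrt (n%:R) / 2) <= dotv un beta * norm2 alpha)
         <-> lambda1 * Num.sqrt (n%:R) / 2 <= norm2 (M *m xh - beta))
      /\
      (lambda1 * Num.sqrt (n%:R) / 2 <= norm2 (M *m xh - beta) ->
       exists xz : 'cV[R]_n,
         [/\ int_vec xz, in_par M beta gamma xz,
             (forall y, int_vec y -> in_par M beta gamma y -> dotv alpha xz <= dotv alpha y)
           & dotv alpha xz - dotv alpha xh <= norm2 alpha * Num.sqrt (n%:R)])).
Proof.
move=> [symM psdM rkM no_sol] [lambda1_eig lambda1_max] un1 Mun beta_un.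
have un0 : un != 0.
  apply/eqP => un_eq0; move: un1; rewrite un_eq0 /norm2 dotv0l sqrtr0.
  by move=> /esym/eqP; rewrite oner_eq0.
have lambda1_ge0 := psd_eigenvalue_ge0 symM psdM lambda1_eig.
have M_le := quad_form_le_eigen_bound symM lambda1_max.
have grad_n0 x : M *m x - beta != 0.
  by rewrite subr_eq0; apply/eqP => Mx; apply: no_sol; exists x.
split=> [xc xc_bd xc_far | alpha xh un_alpha Sxh xh_min].
  have Sxc := in_par_closed symM psdM xc (fun e e_gt0 => (xc_bd e e_gt0).1).
  exact: (int_point_near symM lambda1_ge0 M_le Sxc (grad_n0 xc) xc_far).
have [a a_le0 alpha_eq] := in_par_minimizer_grad symM psdM Sxh xh_min (grad_n0 xh).
have a_lt0 : a < 0.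
  rewrite lt_def a_le0 andbT; apply: contraTneq un_alpha => a0.
  by rewrite alpha_eq -a0 scale0r dotv0r ltxx.
have un_beta : 0 < dotv un beta by rewrite dotvC.
split; first exact: (angle_le_iff_norm2_grad symM a_lt0 alpha_eq Mun un_beta).
move=> xh_far.
have [x0 [x0_int Sx0 x0_near]] :=
  int_point_near symM lambda1_ge0 M_le Sxh (grad_n0 xh) xh_far.
have beta_un0 : dotv beta un != 0 by rewrite gt_eqF.
have [xz [xz_int Sxz xz_min]] :=
  exists_int_in_par_minimizer symM psdM rkM Mun un0 beta_un0 Sxh a_lt0 alpha_eq x0_int Sx0.
exists xz; split => //.
have := xz_min x0 x0_int Sx0; have := xh_min x0 Sx0.
have := dotv_le_norm2 alpha (x0 - xh); rewrite dotvBr.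
have := ler_wpM2l (norm2_ge0 alpha) x0_near.
lra.
Qed.
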